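(* Let $A\in\mathbb{Z}^{d\times n}$, $\mathbf{b}\in\mathbb{Z}^d$, $\mathbf{c}\in\mathbb{Z}^n$, $\mathbf{u}\in\mathbb{Z}_{\ge0}^n$, and consider the LP $\min\{\mathbf{c}^\top\mathbf{x} : A\mathbf{x}=\mathbf{b},\ \mathbf{0}\le\mathbf{x}\le\mathbf{u},\ \mathbf{x}\in\mathbb{R}^n\}$. Then: (i) for every feasible $\mathbf{x}$ and every $\mathbf{z}\in\mathbb{R}^n\setminus\{\mathbf{0}\}$ with $A\mathbf{z}=\mathbf{0}$ and $\mathbf{x}+\epsilon\mathbf{z}$ feasible for some $\epsilon>0$, there exists $\mathbf{g}\in\mathcal{C}(A)$ with $\mathbf{x}+\epsilon'\mathbf{g}$ feasible for some $\epsilon'>0$ and $-\mathbf{c}^\top\mathbf{g}/\|\mathbf{g}\|_1\ge-\mathbf{c}^\top\mathbf{z}/\|\mathbf{z}\|_1$; hence a discrete steepest-descent direction is a steepest-descent direction among all applicable real directions; (ii) from any feasible solution $\mathbf{x}_0$, every sequence of discrete steepest-descent augmentations reaches an optimal solution after at most $|\mathcal{C}(A)|$ augmentations.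
   Context: Feasible solutions are the $\mathbf{x}\in\mathbb{R}^n$ with $A\mathbf{x}=\mathbf{b}$, $\mathbf{0}\le\mathbf{x}\le\mathbf{u}$. The circuits $\mathcal{C}(A)$: for each nonzero $\mathbf{z}\in\ker(A)$ whose support is inclusion-minimal among supports of nonzero vectors of $\ker(A)$, the line $\mathbb{R}\mathbf{z}$ contains exactly two nonzero integer points closest to the origin; $\mathcal{C}(A)$ is the finite set of all these vectors. Discrete steepest-descent augmentation (LP): given a feasible $\mathbf{x}_k$, choose $\mathbf{z}\in\mathcal{C}(A)$ maximizing $-\mathbf{c}^\top\mathbf{z}/\|\mathbf{z}\|_1$ among all $\mathbf{z}\in\mathcal{C}(A)$ such that $\mathbf{x}_k+\epsilon\mathbf{z}$ is feasible for some $\epsilon>0$; if this maximum is positive, let $\alpha$ be the largest real number with $\mathbf{x}_k+\alpha\mathbf{z}$ feasible and set $\mathbf{x}_{k+1}:=\mathbf{x}_k+\alpha\mathbf{z}$, otherwise stop. *)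

(* The LP is stated over an arbitrary real field R
   (in particular over the reals); all notions are algebraic. *)
From HB Require Import structures.
From mathcomp Require Import all_boot all_order all_algebra.
Set Implicit Arguments. Unset Strict Implicit. Unset Printing Implicit Defensive.
Import Order.TTheory GRing.Theory Num.Theory.
Local Open Scope ring_scope.

Section LP.
Variables (R : realFieldType) (d n : nat).
Variables (A : 'M[int]_(d, n)) (b : 'cV[int]_d) (c u : 'cV[int]_n).

Definition intmx (p q : nat) (M : 'M[int]_(p, q)) : 'M[R]_(p, q) :=
  map_mx (fun a : int => a%:~R) M.

Definition AR := intmx A.
Definition bR := intmx b.
Definition cR := intmx c.
Definition uR := intmx u.

Definition cost (x : 'cV[R]_n) : R := \sum_(i < n) cR i 0 * x i 0.

Definition norm1 (z : 'cV[R]_n) : R := \sum_(i < n) `|z i 0|.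

Definition feasible (x : 'cV[R]_n) : Prop :=
  AR *m x = bR /\ forall i : 'I_n, 0 <= x i 0 <= uR i 0.

Definition optimal (x : 'cV[R]_n) : Prop :=
  feasible x /\ forall y, feasible y -> cost x <= cost y.

Definition applicable (x z : 'cV[R]_n) : Prop :=
  exists eps : R, 0 < eps /\ feasible (x + eps *: z).

Definition descent (z : 'cV[R]_n) : R := - cost z / norm1 z.

Definition supp_sub (w z : 'cV[R]_n) : Prop :=
  forall i : 'I_n, w i 0 != 0 -> z i 0 != 0.

Definition min_support_kernel (z : 'cV[R]_n) : Prop :=
  z != 0 /\ AR *m z = 0 /\
  forall w : 'cV[R]_n, w != 0 -> AR *m w = 0 -> supp_sub w z -> supp_sub z w.

Definition on_line (w : 'cV[int]_n) (z : 'cV[R]_n) : Prop :=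
  exists lam : R, intmx w = lam *: z.

(* C(A): the nonzero integer points closest to the origin on the lines
   spanned by support-minimal nonzero kernel vectors *)
Definition circuit (g : 'cV[int]_n) : Prop :=
  exists z : 'cV[R]_n, min_support_kernel z /\
    g != 0 /\ on_line g z /\
    forall w : 'cV[int]_n, w != 0 -> on_line w z -> norm1 (intmx g) <= norm1 (intmx w).

Definition dsd_stopped (x : 'cV[R]_n) : Prop :=
  forall g, circuit g -> applicable x (intmx g) -> descent (intmx g) <= 0.

Definition dsd_step (x x' : 'cV[R]_n) : Prop :=
  exists g : 'cV[int]_n, exists alpha : R,
    circuit g /\ applicable x (intmx g) /\
    (forall h, circuit h -> applicable x (intmx h) ->
       descent (intmx h) <= descent (intmx g)) /\
    0 < descent (intmx g) /\
    feasible (x + alpha *: intmx g) /\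
    (forall beta : R, feasible (x + beta *: intmx g) -> beta <= alpha) /\
    x' = x + alpha *: intmx g.

End LP.

From HB Require Import structures.
From mathcomp Require Import all_boot all_order all_algebra.
From mathcomp Require Import ring lra.
From Stdlib Require Import Classical ClassicalEpsilon.
Set Implicit Arguments. Unset Strict Implicit. Unset Printing Implicit Defensive.
Import Order.TTheory GRing.Theory Num.Theory.
Local Open Scope ring_scope.

(** (i) A nonzero kernel vector [z] whose support is not minimal splits as
   [z = a p + b q] with [a, b > 0] and [p], [q] kernel vectors conforming to [z]
   (same signs, support inside that of [z]) of strictly smaller support: pick a
   kernel vector [w] with a smaller support inside that of [z] and move from [z]
   along [-w] and along [w] until a coordinate vanishes.  Conforming directions stay
   applicable, and as the 1-norm is additive on them the ratio
   [-c^T z / ||z||_1] is at most the larger of the ratios of [p] and [q].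
   Induction on the support ends at support-minimal vectors, which are positive
   multiples of circuits.

   (ii) A circuit is determined by its sign pattern, so there are finitely many.
   By (i) applied to the sum of two consecutive augmentation steps, the ratios of
   the circuits used never increase.  After augmenting along [g] at step [k], the
   new point [y] is blocked by some coordinate [j] in direction [g]; if [g] were
   used again at a step [l > k], the feasible direction [(x_l - y) + eps g] from [y]
   would cancel in coordinate [j] and be strictly steeper than every circuit at
   [y], contradicting (i).  So no circuit is used twice.  A stopped point is
   optimal by (i) applied to [y - x] for any feasible [y]. *)

Lemma ex_argmin_nat (T : Type) (P : T -> Prop) (m : T -> nat) :
  (exists x, P x) -> exists2 x, P x & forall y, P y -> (m x <= m y)%N.
Proof.
move=> [x Px]; apply: NNPP => nomin.
suff /(_ _ x (leqnn _)) : forall k y, (m y <= k)%N -> ~ P y by [].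
elim=> [|k IH] y hy Py; apply: nomin; exists y => // z Pz.
  exact: leq_trans hy _.
by rewrite leqNgt; apply/negP => hzy; exact: IH z (leq_trans hzy hy) Pz.
Qed.

Lemma ex_argmax_seq (R : realDomainType) (T : eqType) (s : seq T) (P : T -> Prop)
    (F : T -> R) :
  (exists2 x, x \in s & P x) ->
  exists x, [/\ x \in s, P x & forall y, y \in s -> P y -> F y <= F x].
Proof.
elim: s => [|a s IH] [x xs Px] //.
have [[y ys Py]|none] := classic (exists2 y, y \in s & P y); last first.
  have Pa : P a by move: xs; rewrite inE => /predU1P[<-//|xs]; case: none; exists x.
  exists a; split; rewrite ?mem_head // => w; rewrite inE => /predU1P[->//|ws Pw].
  by case: none; exists w.
have [z [zs Pz zmax]] := IH (ex_intro2 _ _ y ys Py).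
have [[Pa za]|not_a] := classic (P a /\ F z <= F a).
  exists a; split; rewrite ?mem_head // => w; rewrite inE => /predU1P[->//|ws Pw].
  exact: le_trans (zmax w ws Pw) za.
exists z; split; rewrite ?inE ?zs ?orbT // => w; rewrite inE => /predU1P[-> Pa|/zmax//].
by rewrite leNgt; apply/negP => /ltW za; apply: not_a.
Qed.

Lemma ex_finite_enum (T : eqType) (K : finType) (P : T -> Prop) (key : T -> K) :
  (forall x y, P x -> P y -> key x = key y -> x = y) ->
  exists s : seq T, uniq s /\ forall x, x \in s <-> P x.
Proof.
move=> key_inj.
have [f fP] : exists f : K -> option T,
    forall k, if f k is Some x then P x /\ key x = k else forall x, P x -> key x != k.
  exists (fun k => match excluded_middle_informative (exists x, P x /\ key x = k) with
    | left ex => Some (proj1_sig (constructive_indefinite_description _ ex))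
    | right _ => None end).
  move=> k; case: (excluded_middle_informative _) => [ex|nex] /=.
    exact: (proj2_sig (constructive_indefinite_description _ ex)).
  by move=> x Px; apply/eqP => kx; apply: nex; exists x.
have fK : ocancel f key by move=> k; have := fP k; case: (f k) => //= x [_ ->].
exists (pmap f (enum K)); split; first exact: (pmap_uniq fK (enum_uniq K)).
move=> x; rewrite mem_pmap; split.
  by case/mapP => k _ fkx; have := fP k; rewrite -fkx => -[].
move=> Px; apply/mapP; exists (key x); first by rewrite mem_enum.
have := fP (key x); case: (f (key x)) => [y [Py kyx]|/(_ x Px)]; last by rewrite eqxx.
by rewrite (key_inj _ _ Px Py (esym kyx)).
Qed.

Lemma norm_between (R : realDomainType) (x lo hi a t : R) :
  lo <= x <= hi -> lo <= x + t <= hi -> 0 <= a * t -> `|a| <= `|t| ->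
  lo <= x + a <= hi.
Proof.
move=> /andP[x_lo x_hi] /andP[xt_lo xt_hi] at0.
case: (lerP 0 a) => ha; case: (lerP 0 t) => ht;
  rewrite ?(ger0_norm ha) ?(ger0_norm ht) ?(ltr0_norm ha) ?(ltr0_norm ht) => hn;
  apply/andP; split; nra.
Qed.

Lemma sqr_gt0 (R : realDomainType) (x : R) : x != 0 -> 0 < x ^+ 2.
Proof. by move=> nx; rewrite exprn_even_gt0 // nx orbT. Qed.

Lemma normD_same_sign (R : realDomainType) (p q : R) :
  0 <= p * q -> `|p + q| = `|p| + `|q|.
Proof.
move=> h; case: (lerP 0 q) => hq; case: (lerP 0 (p + q)) => hpq; case: (lerP 0 p) => hp;
  rewrite ?(ger0_norm hq) ?(ltr0_norm hq) ?(ger0_norm hpq) ?(ltr0_norm hpq)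
          ?(ger0_norm hp) ?(ltr0_norm hp); nra.
Qed.

Lemma normD_opposite_sign (R : realDomainType) (p q : R) :
  q * (p + q) <= 0 -> `|p + q| = `|p| - `|q|.
Proof.
move=> h; case: (lerP 0 q) => hq; case: (lerP 0 (p + q)) => hpq; case: (lerP 0 p) => hp;
  rewrite ?(ger0_norm hq) ?(ltr0_norm hq) ?(ger0_norm hpq) ?(ltr0_norm hpq)
          ?(ger0_norm hp) ?(ltr0_norm hp); nra.
Qed.

Lemma map_kernel_nonzero (F K : fieldType) (f : {rmorphism F -> K}) p q
    (M : 'M[F]_(p, q)) (v : 'cV[K]_q) :
  v != 0 -> map_mx f M *m v = 0 -> exists2 r : 'cV[F]_q, r != 0 & M *m r = 0.
Proof.
move=> nv Mv; have /rowV0Pn[r /sub_kermxP rM nr] : kermx M^T != 0.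
  rewrite kermx_eq0 -(row_free_map f); apply: contraNN nv => free.
  apply/eqP/trmx_inj/(row_free_inj free).
  by rewrite trmx0 mul0mx -map_trmx -trmx_mul Mv trmx0.
by exists r^T; rewrite ?trmx_eq0 // -[M]trmxK -trmx_mul rM trmx0.
Qed.

Lemma rat_col_scale_int q (r : 'cV[rat]_q) :
  exists2 D : int, 0 < D & exists w : 'cV[int]_q, map_mx intr w = D%:~R *: r.
Proof.
pose D := \prod_k denq (r k 0); exists D; first by apply: prodr_gt0 => k _.
pose P i := \prod_(k | k != i) denq (r k 0).
exists (\col_i (numq (r i 0) * P i)).
apply/matrixP => i j; rewrite (ord1 j) !mxE intrM numqE /D (bigD1 i) //= intrM.
ring.
Qed.

Section LP.
Variables (R : realFieldType) (d n : nat) (A : 'M[int]_(d, n)) (b : 'cV[int]_d).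
Variables (c u : 'cV[int]_n).

Local Notation AR := (AR R A).
Local Notation iR := (intmx R).
Local Notation feasible := (feasible A b u).
Local Notation applicable := (applicable A b u).
Local Notation circuit := (circuit R A).
Local Notation cost := (cost c).
Local Notation descent := (descent c).
Implicit Types (x y z w p q : 'cV[R]_n) (g h : 'cV[int]_n).

Lemma costD x y : cost (x + y) = cost x + cost y.
Proof. by rewrite /cost -big_split; apply: eq_bigr => i _; rewrite !mxE mulrDr. Qed.

Lemma costZ a x : cost (a *: x) = a * cost x.
Proof. by rewrite /cost mulr_sumr; apply: eq_bigr => i _; rewrite !mxE mulrCA. Qed.

Lemma costB x y : cost (x - y) = cost x - cost y.
Proof. by rewrite costD -scaleN1r costZ mulN1r. Qed.

Lemma norm1_ge0 x : 0 <= norm1 x.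
Proof. exact: sumr_ge0. Qed.

Lemma norm1Z a x : norm1 (a *: x) = `|a| * norm1 x.
Proof. by rewrite /norm1 mulr_sumr; apply: eq_bigr => i _; rewrite mxE normrM. Qed.

Lemma norm1D x y : norm1 (x + y) <= norm1 x + norm1 y.
Proof. by rewrite /norm1 -big_split; apply: ler_sum => i _; rewrite mxE ler_normD. Qed.

Lemma norm1D_cancel x w e j : 0 < e -> w j 0 * (x j 0 + e * w j 0) <= 0 ->
  norm1 (x + e *: w) <= norm1 x + e * norm1 w - 2 * e * `|w j 0|.
Proof.
move=> e0 opp; rewrite /norm1 (bigD1 j) //= [\sum_i `|x i 0|](bigD1 j) //=.
rewrite [\sum_i `|w i 0|](bigD1 j) //= !mxE normD_opposite_sign; last first.
  by rewrite -mulrA mulr_ge0_le0 // ltW.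
have rest : \sum_(i | i != j) `|(x + e *: w) i 0| <=
    \sum_(i | i != j) `|x i 0| + e * \sum_(i | i != j) `|w i 0|.
  rewrite mulr_sumr -big_split /=; apply: ler_sum => i _.
  by rewrite !mxE (le_trans (ler_normD _ _)) // normrM gtr0_norm.
rewrite normrM gtr0_norm //; lra.
Qed.

Lemma col_neq0P x : reflect (exists i, x i 0 != 0) (x != 0).
Proof.
apply: (iffP idP) => [nz|[i]]; last by apply: contraNneq => ->; rewrite mxE.
apply: NNPP => none; move/eqP: nz; apply; apply/matrixP => i j.
by rewrite ord1 mxE; apply/eqP; apply: contra_notT none => ?; exists i.
Qed.

Lemma norm1_gt0 x : x != 0 -> 0 < norm1 x.
Proof.
move=> /col_neq0P[i xi]; rewrite /norm1 (bigD1 i) //=.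
by rewrite ltr_pwDl ?normr_gt0 ?sumr_ge0.
Qed.

Lemma norm10 : norm1 (0 : 'cV[R]_n) = 0.
Proof. by rewrite /norm1 big1 // => i _; rewrite mxE normr0. Qed.

Lemma descentZ a x : 0 < a -> descent (a *: x) = descent x.
Proof.
move=> a0; rewrite /descent costZ norm1Z gtr0_norm // -mulrN invfM mulrACA.
by rewrite divff ?gt_eqF // mul1r.
Qed.

Lemma descent_le x D : x != 0 -> (descent x <= D) = (- cost x <= D * norm1 x).
Proof. by move=> /norm1_gt0 ?; rewrite ler_pdivrMr. Qed.

Lemma descent_mulnorm1 x : x != 0 -> - cost x = descent x * norm1 x.
Proof. by move=> /norm1_gt0 nx; rewrite /descent divfK // gt_eqF. Qed.

Definition conformal w z := forall i, 0 <= w i 0 * z i 0 /\ (z i 0 = 0 -> w i 0 = 0).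

Definition supp z : {set 'I_n} := [set i | z i 0 != 0].

Lemma supp_sub_eq0 v z i : supp_sub v z -> z i 0 = 0 -> v i 0 = 0.
Proof. by move=> vz zi; apply/eqP; apply: contraT => /vz; rewrite zi eqxx. Qed.

Lemma supp_subN v z : supp_sub v z -> supp_sub (- v) z.
Proof. by move=> vz i; rewrite mxE oppr_eq0; exact: vz. Qed.

Lemma conformal_trans p w z : conformal w p -> conformal p z -> conformal w z.
Proof.
move=> wp pz i; have [wp1 wp0] := wp i; have [pz1 pz0] := pz i.
split=> [|/pz0/wp0//]; have [p0|] := eqVneq (p i 0) 0; first by rewrite wp0 ?mul0r.
by move=> /sqr_gt0; nra.
Qed.

Lemma conformalZ a z : 0 < a -> conformal (a *: z) z.
Proof.
move=> a0 i; rewrite mxE -mulrA; split=> [|->]; last by rewrite mulr0.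
by rewrite mulr_ge0 -?expr2 ?sqr_ge0 // ltW.
Qed.

Lemma conformal_supp_lt p z j :
  conformal p z -> z j 0 != 0 -> p j 0 = 0 -> (#|supp p| < #|supp z|)%N.
Proof.
move=> pz zj pj; apply/proper_card/properP; split.
  by apply/subsetP => i; rewrite !inE; apply: contra => /eqP/(proj2 (pz i))->.
by exists j; rewrite !inE ?pj ?eqxx.
Qed.

Lemma feasible_box x i : feasible x -> 0 <= x i 0 <= uR R u i 0.
Proof. by case=> _ /(_ i). Qed.

Lemma feasibleD x w : feasible x -> AR *m w = 0 ->
  (forall i, 0 <= x i 0 + w i 0 <= uR R u i 0) -> feasible (x + w).
Proof.
by move=> [Ax _] Aw box; split=> [|i]; rewrite ?mulmxDr ?Ax ?Aw ?addr0 // mxE.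
Qed.

Lemma applicable_conformal x w z : feasible x -> applicable x z ->
  AR *m w = 0 -> conformal w z -> applicable x w.
Proof.
move=> fx [eps [eps0 fz]] Aw wz.
pose M := \sum_i `|w i 0| / `|z i 0| + 1.
have M0 : 0 < M by rewrite ltr_wpDl // sumr_ge0 // => i _; rewrite divr_ge0.
(* [M] dominates every ratio [|w_i| / |z_i|], with [0 / 0 = 0] where [z_i = 0] *)
have wM i : `|w i 0| <= M * `|z i 0|.
  have [zi|zi] := eqVneq (z i 0) 0; first by rewrite (proj2 (wz i) zi) zi normr0 mulr0.
  rewrite -ler_pdivrMr ?normr_gt0 // /M (bigD1 i) //= -addrA lerDl addr_ge0 //.
  by rewrite sumr_ge0 // => j _; rewrite divr_ge0.
exists (eps / M); split; first by rewrite divr_gt0.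
apply: feasibleD => // [|i]; first by rewrite -scalemxAr Aw scaler0.
move: (feasible_box i fx) (feasible_box i fz); rewrite !mxE => hx hz.
apply: (norm_between hx hz).
  have [wz0 _] := wz i.
  by rewrite mulrACA mulr_ge0 // !mulr_ge0 ?invr_ge0 ?(ltW eps0) ?(ltW M0).
rewrite !normrM normfV (gtr0_norm eps0) (gtr0_norm M0) -mulrA ler_pM2l //.
by rewrite ler_pdivrMl.
Qed.

Lemma descent_conformal_sum a b' p q D : 0 < a -> 0 < b' ->
  conformal p (a *: p + b' *: q) -> conformal q (a *: p + b' *: q) ->
  p != 0 -> q != 0 -> descent p <= D -> descent q <= D ->
  descent (a *: p + b' *: q) <= D.
Proof.
set z := a *: p + b' *: q => a0 b0 pz qz np nq.
have nz : z != 0.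
  apply: contraNneq np => z0; apply/col_neq0P => -[i]; rewrite (proj2 (pz i)) ?eqxx //.
  by rewrite z0 mxE.
have normz : norm1 z = a * norm1 p + b' * norm1 q.
  rewrite /norm1 !mulr_sumr -big_split; apply: eq_bigr => i _ /=.
  rewrite !mxE normD_same_sign ?normrM ?(gtr0_norm a0) ?(gtr0_norm b0) //.
  have [zi|zi] := eqVneq (z i 0) 0; first by rewrite (proj2 (pz i) zi) mulr0 mul0r.
  have pq : 0 <= p i 0 * q i 0.
    have := mulr_ge0 (proj1 (pz i)) (proj1 (qz i)).
    by rewrite mulrACA -expr2 pmulr_lge0 ?sqr_gt0.
  by rewrite mulrACA mulr_ge0 // mulr_ge0 // ltW.
rewrite !descent_le // normz /z costD !costZ => hp hq; nra.
Qed.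

Lemma min_support_multiple z v : min_support_kernel A z -> AR *m v = 0 -> supp_sub v z ->
  exists mu, v = mu *: z.
Proof.
move=> [/col_neq0P[i zi] [Az zmin]] Av vz; exists (v i 0 / z i 0).
set w := v - (v i 0 / z i 0) *: z.
apply/eqP; rewrite -subr_eq0 -/w; apply: contraT => nw.
have Aw : AR *m w = 0 by rewrite mulmxBr -scalemxAr Av Az scaler0 subrr.
have wz : supp_sub w z.
  move=> j; rewrite !mxE; apply: contraNneq => zj.
  by rewrite (supp_sub_eq0 vz zj) zj mulr0 subrr.
by have := zmin _ nw Aw wz i zi; rewrite !mxE divfK // subrr eqxx.
Qed.

Lemma intmxN g : iR (- g) = - iR g.
Proof. by apply/matrixP => i j; rewrite !mxE intrN. Qed.

Lemma intmx_eq0 g : (iR g == 0) = (g == 0).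
Proof.
apply/eqP/eqP => [/matrixP g0|->]; last by apply/matrixP => i j; rewrite !mxE.
by apply/matrixP => i j; move: (g0 i j); rewrite !mxE => /eqP; rewrite intr_eq0 => /eqP.
Qed.

Lemma norm1_intmx g : norm1 (iR g) = (\sum_i `|g i 0%R|)%N%:R.
Proof. by rewrite natr_sum; apply: eq_bigr => i _; rewrite mxE natr_absz intr_norm. Qed.

Lemma ex_int_on_line z : min_support_kernel A z -> exists g, g != 0 /\ on_line g z.
Proof.
move=> zmsk; have [nz [Az _]] := zmsk.
(* Over [Q], the kernel of [A] stacked with the rows [e_i^T] for [z_i = 0]: it
   contains [z], hence a nonzero rational vector, which is a multiple of [z]. *)
pose M : 'M[rat]_(d + n, n) :=
  col_mx (map_mx intr A) (diag_mx (\row_i (z i 0 == 0)%:R)).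
have MvE v : map_mx ratr M *m v = col_mx (AR *m v) (\col_i ((z i 0 == 0)%:R * v i 0)).
  rewrite map_col_mx mul_col_mx map_diag_mx mul_diag_mx; congr col_mx.
    by congr (_ *m _); apply/matrixP => i j; rewrite !mxE ratr_int.
  by apply/matrixP => i j; rewrite (ord1 j) !mxE rmorph_nat.
have [r nr Mr] : exists2 r : 'cV[rat]_n, r != 0 & M *m r = 0.
  apply: (map_kernel_nonzero (f := ratr) nz); rewrite MvE Az; apply/eqP; rewrite col_mx_eq0 eqxx /=.
  by apply/eqP/matrixP => i j; rewrite !mxE; case: eqP => [->|]; rewrite ?mulr0 ?mul0r.
have := congr1 (map_mx (@ratr R)) Mr; rewrite map_mxM map_mx0 => /eqP.
rewrite MvE col_mx_eq0 => /andP[/eqP Av /eqP vsupp].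
have [mu vE] : exists mu, map_mx ratr r = mu *: z.
  apply: min_support_multiple zmsk Av _ => i; apply: contraNneq => zi.
  by move/matrixP: vsupp => /(_ i 0); rewrite !mxE zi eqxx mul1r => ->.
have [D D0 [g gE]] := rat_col_scale_int r.
have gR : iR g = D%:~R *: map_mx ratr r.
  apply/matrixP => i j; move/matrixP: gE => /(_ i j)/(congr1 (@ratr R)).
  by rewrite !mxE rmorphM /= !ratr_int.
exists g; split; last by exists (D%:~R * mu); rewrite gR vE scalerA.
by rewrite -intmx_eq0 gR scaler_eq0 intr_eq0 gt_eqF //= map_mx_eq0.
Qed.

Lemma line_scale_neq0 g lam z : g != 0 -> iR g = lam *: z -> lam != 0.
Proof.
by move=> ng gE; apply: contra_neq ng => l0; apply/eqP; rewrite -intmx_eq0 gE l0 scale0r.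
Qed.

Lemma circuitN g : circuit g -> circuit (- g).
Proof.
case=> z [zmsk [ng [[lam gE] gmin]]]; exists z; split=> //.
split; first by rewrite oppr_eq0.
split; first by exists (- lam); rewrite intmxN gE scaleNr.
by move=> w nw /(gmin w nw); rewrite intmxN -scaleN1r norm1Z normrN1 mul1r.
Qed.

Lemma circuit_of_min_support z : min_support_kernel A z ->
  exists g lam, [/\ circuit g, 0 < lam & iR g = lam *: z].
Proof.
move=> zmsk; have [g [ng gz] gmin] :=
  ex_argmin_nat (fun g => (\sum_i `|g i 0%R|)%N) (ex_int_on_line zmsk).
have cg : circuit g.
  exists z; do 3!split=> //; move=> w nw wz.
  by rewrite !norm1_intmx ler_nat; exact: gmin.
have [lam gE] := gz.
have lam0 := line_scale_neq0 ng gE.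
have [lam_gt0|lam_lt0] := ltrP 0 lam; first by exists g, lam.
exists (- g), (- lam); split; first exact: circuitN.
  by rewrite oppr_gt0 lt_neqAle lam0.
by rewrite intmxN gE scaleNr.
Qed.

Lemma intmx_inj : injective (@intmx R n 1).
Proof.
move=> g g' /matrixP gE; apply/matrixP => i j.
by apply/eqP; move: (gE i j); rewrite !mxE => /eqP; rewrite eqr_int.
Qed.

Definition sign_pattern g : {ffun 'I_n -> bool * bool} := [ffun i => (0 < g i 0, g i 0 < 0)].

Lemma circuit_sign_pattern_inj g g' : circuit g -> circuit g' ->
  sign_pattern g = sign_pattern g' -> g = g'.
Proof.
(* Equal supports make [z'] a multiple of [z] by support-minimality, so [g' = rho g];
   minimality of the norms gives [|rho| = 1] and equal signs give [rho = 1]. *)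
move=> [z [zmsk [ng [[lam gE] gmin]]]] [z' [z'msk [ng' [[lam' g'E] gmin']]]] /ffunP kE.
have signE i : (0 < g i 0) = (0 < g' i 0) /\ (g i 0 < 0) = (g' i 0 < 0).
  by move: (kE i); rewrite !ffunE => -[-> ->].
have [l0 l0'] := (line_scale_neq0 ng gE, line_scale_neq0 ng' g'E).
have suppE h l w : iR h = l *: w -> l != 0 -> forall i, (h i 0 != 0) = (w i 0 != 0).
  by move=> /matrixP hE ln0 i; move: (hE i 0); rewrite !mxE => /eqP;
    rewrite -(intr_eq0 R) => /eqP ->; rewrite mulf_eq0 negb_or ln0.
have [mu z'E] : exists mu, z' = mu *: z.
  apply: min_support_multiple zmsk (proj1 (proj2 z'msk)) _ => i.
  rewrite -(suppE _ _ _ g'E) // -(suppE _ _ _ gE) // !neq_lt.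
  by case: (signE i) => -> ->.
have mu0 : mu != 0 by apply: contra_neq (proj1 z'msk) => m0; rewrite z'E m0 scale0r.
set rho := lam' * mu / lam.
have g'E' : iR g' = rho *: iR g by rewrite g'E z'E gE !scalerA divfK.
have : norm1 (iR g) = norm1 (iR g').
  apply/eqP; rewrite eq_le gmin ?gmin' //; first by exists (lam / mu); rewrite gE z'E scalerA divfK.
  by exists (lam' * mu); rewrite g'E z'E scalerA.
rewrite g'E' norm1Z -{1}[norm1 (iR g)]mul1r => /mulIf; rewrite gt_eqF ?norm1_gt0 ?intmx_eq0 //.
move=> /(_ isT) /esym rho1.
have [i gi] : exists i, iR g i 0 != 0 by apply/col_neq0P; rewrite intmx_eq0.
have gg'_gt0 : 0 < g i 0 * g' i 0.
  have [pE nE] := signE i; move: gi; rewrite mxE intr_eq0 neq_lt => /orP[gneg|gpos].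
    by rewrite nmulr_rgt0 // -nE.
  by rewrite pmulr_rgt0 // -pE.
have rho_gt0 : 0 < rho.
  move: gg'_gt0; rewrite -(ltr0z R) intrM; move/matrixP: g'E' => /(_ i 0).
  rewrite !mxE => ->; rewrite mulrCA -expr2 pmulr_lgt0 // sqr_gt0 //.
  by move: gi; rewrite mxE.
by apply: intmx_inj; rewrite g'E' -[rho]gtr0_norm // rho1 scale1r.
Qed.

Lemma ex_circuits_enum : exists s : seq 'cV[int]_n, uniq s /\ forall g, g \in s <-> circuit g.
Proof. exact: ex_finite_enum circuit_sign_pattern_inj. Qed.

Definition conformal_part p z :=
  [/\ p != 0, AR *m p = 0, conformal p z & (#|supp p| < #|supp z|)%N].

Lemma ex_conformal_elim z v j : AR *m z = 0 -> AR *m v = 0 -> supp_sub v z ->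
    z j 0 != 0 -> v j 0 = 0 -> (exists i, 0 < v i 0 * z i 0) ->
  exists2 t, 0 < t & conformal_part (z - t *: v) z.
Proof.
move=> Az Av vz zj vj [i0 pos0].
case: (@arg_minP _ _ _ i0 (fun k => 0 < v k 0 * z k 0) (fun k => z k 0 / v k 0) pos0).
move=> i pos_i tmin.
have [vi zi] : v i 0 != 0 /\ z i 0 != 0 by apply/andP; rewrite -negb_or -mulf_eq0 gt_eqF.
(* the ratio test: [t] is the largest step keeping [z - t v] conformal to [z] *)
set t := z i 0 / v i 0.
have t0 : 0 < t.
  by rewrite /t (_ : _ / _ = v i 0 * z i 0 / v i 0 ^+ 2) ?divr_gt0 ?sqr_gt0 //; field.
have zt_conf : conformal (z - t *: v) z.
  move=> k; rewrite !mxE; split=> [|zk]; last first.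
    by rewrite zk (supp_sub_eq0 vz zk) mulr0 subr0.
  rewrite mulrBl subr_ge0 -mulrA; have [pos_k|] := ltrP 0 (v k 0 * z k 0).
    have vk : v k 0 != 0 by apply: contraTneq pos_k => ->; rewrite mul0r ltxx.
    apply: le_trans (ler_wpM2r (ltW pos_k) (tmin k pos_k)) _.
    by rewrite mulrA divfK.
  by move=> /(ler_wpM2l (ltW t0)); rewrite mulr0 => /le_trans; apply; rewrite -expr2 sqr_ge0.
exists t => //; split=> //.
- by apply/col_neq0P; exists j; rewrite !mxE vj mulr0 subr0.
- by rewrite mulmxBr -scalemxAr Av Az scaler0 subrr.
- by apply: (conformal_supp_lt zt_conf zi); rewrite !mxE /t divfK // subrr.
Qed.

Lemma conformal_split z : z != 0 -> AR *m z = 0 -> ~ min_support_kernel A z ->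
  exists a b' p q,
    [/\ 0 < a, 0 < b', z = a *: p + b' *: q, conformal_part p z & conformal_part q z].
Proof.
move=> nz Az nmsk.
have [w [nw Aw wz] [j [zj wj]]] : exists2 w, [/\ w != 0, AR *m w = 0 & supp_sub w z] &
    exists j, z j 0 != 0 /\ w j 0 = 0.
  apply: NNPP => none; apply: nmsk; split=> //; split=> // w nw Aw wz j zj.
  by apply/negP => /eqP wj; apply: none; exists w => //; exists j.
wlog pos : w nw Aw wz wj / exists i, 0 < w i 0 * z i 0.
  move=> main; have /col_neq0P[i wi] := nw.
  move: (mulf_neq0 wi (wz i wi)); rewrite neq_lt => /orP[neg|pos]; last first.
    by apply: (main w) => //; exists i.
  apply: (main (- w)); rewrite ?oppr_eq0 ?mulmxN ?Aw ?oppr0 ?mxE ?wj ?oppr0 //.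
    exact: supp_subN.
  by exists i; rewrite mxE mulNr oppr_gt0.
have [t t0 part1] := ex_conformal_elim Az Aw wz zj wj pos.
have [[i neg]|none] := classic (exists i, w i 0 * z i 0 < 0).
  have [s s0 part2] : exists2 s, 0 < s & conformal_part (z - s *: - w) z.
    apply: (ex_conformal_elim Az _ (supp_subN wz) zj); rewrite ?mulmxN ?Aw ?oppr0 //.
      by rewrite mxE wj oppr0.
    by exists i; rewrite mxE mulNr oppr_gt0.
  exists (s / (s + t)), (t / (s + t)), (z - t *: w), (z - s *: - w); split=> //;
    try by rewrite divr_gt0 // addr_gt0.
  apply/matrixP => k l; rewrite !mxE; field.
  by rewrite gt_eqF // addr_gt0.
have wz_conf : conformal w z.
  move=> k; split; first by rewrite leNgt; apply/negP => neg; apply: none; exists k.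
  exact: supp_sub_eq0.
exists 1, t, (z - t *: w), w; split=> //; first by rewrite scale1r subrK.
by split=> //; exact: conformal_supp_lt wz_conf zj wj.
Qed.

Lemma circuit_kernel g : circuit g -> AR *m iR g = 0.
Proof. by case=> z [[_ [Az _]] [_ [[lam ->] _]]]; rewrite -scalemxAr Az scaler0. Qed.

Lemma circuit_neq0 g : circuit g -> iR g != 0.
Proof. by case=> z [_ [ng _]]; rewrite intmx_eq0. Qed.

Lemma ex_conformal_circuit z : z != 0 -> AR *m z = 0 ->
  exists g, [/\ circuit g, conformal (iR g) z & descent z <= descent (iR g)].
Proof.
move: {2}#|supp z| (leqnn #|supp z|) => k; elim: k z => [|k IH] z zk nz Az.
  have /col_neq0P[i zi] := nz.
  by move: zk; rewrite leqn0 cards_eq0 => /eqP/setP/(_ i); rewrite !inE zi.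
have [zmsk|nmsk] := classic (min_support_kernel A z).
  have [g [lam [cg lam0 gE]]] := circuit_of_min_support zmsk.
  by exists g; rewrite gE descentZ //; split=> //; exact: conformalZ.
have [a [b' [p [q [a0 b0 zE [np Ap pz psupp] [nq Aq qz qsupp]]]]]] := conformal_split nz Az nmsk.
have [gp [cgp gpp dp]] := IH p (ltnSE (leq_trans psupp zk)) np Ap.
have [gq [cgq gqq dq]] := IH q (ltnSE (leq_trans qsupp zk)) nq Aq.
have [g [cg gpq [dgp dgq]]] : exists g, [/\ circuit g,
    conformal (iR g) p \/ conformal (iR g) q &
    descent (iR gp) <= descent (iR g) /\ descent (iR gq) <= descent (iR g)].
  have [le|lt] := lerP (descent (iR gp)) (descent (iR gq)).
    by exists gq; split; [|right|].
  by exists gp; split; [|left|split=> //; exact: ltW].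
exists g; split=> //; first by case: gpq => [/conformal_trans|/conformal_trans]; apply.
rewrite zE; apply: descent_conformal_sum; rewrite -?zE //.
  exact: le_trans dp dgp.
exact: le_trans dq dgq.
Qed.

Lemma ex_circuit_descent_ge x z : feasible x -> z != 0 -> AR *m z = 0 -> applicable x z ->
  exists g, [/\ circuit g, applicable x (iR g) & descent z <= descent (iR g)].
Proof.
move=> fx nz Az az; have [g [cg gz dg]] := ex_conformal_circuit nz Az.
by exists g; split=> //; apply: applicable_conformal fx az (circuit_kernel cg) gz.
Qed.

Definition blocked x w :=
  exists j, w j 0 != 0 /\ forall y, feasible y -> w j 0 * (y j 0 - x j 0) <= 0.

Lemma blocked_max x w alpha beta :
  blocked (x + alpha *: w) w -> feasible (x + beta *: w) -> beta <= alpha.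
Proof.
move=> [j [wj wmax]] /wmax; rewrite !mxE => h.
by have := sqr_gt0 wj; nra.
Qed.

Lemma ratio_test x w : feasible x -> AR *m w = 0 -> w != 0 ->
  exists alpha, feasible (x + alpha *: w) /\ blocked (x + alpha *: w) w.
Proof.
move=> fx Aw /col_neq0P[i0 wi0].
pose bound i := if 0 < w i 0 then (uR R u i 0 - x i 0) / w i 0 else x i 0 / - w i 0.
have boundP i beta : w i 0 != 0 -> 0 <= beta ->
    (beta <= bound i) = (0 <= x i 0 + beta * w i 0 <= uR R u i 0).
  move=> wi b0; have /andP[x0 xu] := feasible_box i fx; rewrite /bound.
  case: ifP => [wpos|/negbT wneg].
    by rewrite ler_pdivlMr //; apply/idP/andP => [h|[_ h]]; [split; nra|nra].
  have {}wneg : w i 0 < 0 by rewrite lt_neqAle wi leNgt.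
  by rewrite ler_pdivlMr ?oppr_gt0 //; apply/idP/andP => [h|[h _]]; [split; nra|nra].
case: (@arg_minP _ _ _ i0 (fun i => w i 0 != 0) bound wi0) => j wj jmin.
have alpha0 : 0 <= bound j.
  by rewrite boundP // mul0r addr0; exact: (feasible_box j fx).
exists (bound j); split.
  apply: feasibleD => // [|i]; first by rewrite -scalemxAr Aw scaler0.
  rewrite [X in x i 0 + X]mxE; have [->|wi] := eqVneq (w i 0) 0.
    by rewrite mulr0 addr0; exact: (feasible_box i fx).
  by rewrite -boundP // (jmin i wi).
exists j; split=> // y fy; move: (feasible_box j fy) (feasible_box j fx).
rewrite /bound !mxE; case: ifP => [wpos|/negbT wneg] /andP[y0 yu] /andP[x0 xu].
  by rewrite divfK //; nra.
have {}wneg : w j 0 < 0 by rewrite lt_neqAle wj leNgt.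
by rewrite invrN mulrN mulNr divfK //; nra.
Qed.

Lemma feasible_sub_kernel x y : feasible x -> feasible y -> AR *m (y - x) = 0.
Proof. by move=> [Ax _] [Ay _]; rewrite mulmxBr Ax Ay subrr. Qed.

Lemma steepest_bound x w delta : feasible x ->
  (forall h, circuit h -> applicable x (iR h) -> descent (iR h) <= delta) ->
  AR *m w = 0 -> feasible (x + w) -> - cost w <= delta * norm1 w.
Proof.
move=> fx hmax Aw fxw; have [->|nw] := eqVneq w 0.
  by rewrite -[0 : 'cV_n](scale0r 0) costZ norm1Z normr0 !mul0r oppr0 mulr0.
have [|h [ch ah dh]] := ex_circuit_descent_ge fx nw Aw.
  by exists 1; rewrite scale1r ltr01.
by rewrite -descent_le // (le_trans dh) ?hmax.
Qed.

Lemma dsd_stopped_optimal x : feasible x -> dsd_stopped A b c u x -> optimal A b c u x.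
Proof.
move=> fx stopped; split=> // y fy.
have := steepest_bound fx stopped (feasible_sub_kernel fx fy); rewrite addrC subrK.
by rewrite mul0r costB opprB subr_le0 => /(_ fy).
Qed.

Definition steepest_at x g := [/\ circuit g, applicable x (iR g), 0 < descent (iR g) &
  forall h, circuit h -> applicable x (iR h) -> descent (iR h) <= descent (iR g)].

Definition max_step x w alpha :=
  feasible (x + alpha *: w) /\ forall beta, feasible (x + beta *: w) -> beta <= alpha.

Lemma dsd_stepP x x' : dsd_step A b c u x x' <->
  exists g alpha, [/\ steepest_at x g, max_step x (iR g) alpha & x' = x + alpha *: iR g].
Proof.
split=> [[g [al [cg [ag [gmax [gpos [fal [almax ->]]]]]]]]|].
  by exists g, al; split=> //; split.
by case=> g [al [[cg ag gpos gmax] [fal almax] ->]]; exists g, al; do 6!(split=> //).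
Qed.

Lemma max_step_gt0 x w alpha : applicable x w -> max_step x w alpha -> 0 < alpha.
Proof. by case=> eps [eps0 feps] [_ /(_ _ feps)]; apply: lt_le_trans. Qed.

Lemma max_step_blocked x w alpha : feasible x -> AR *m w = 0 -> w != 0 ->
  max_step x w alpha -> blocked (x + alpha *: w) w.
Proof.
move=> fx Aw nw [fal almax]; have [al' [fal' blk]] := ratio_test fx Aw nw.
suff -> : alpha = al' by [].
by apply/eqP; rewrite eq_le (blocked_max blk fal) almax.
Qed.

Lemma ex_dsd_step (s : seq 'cV[int]_n) x : (forall g, g \in s <-> circuit g) -> feasible x ->
  ~ dsd_stopped A b c u x -> exists y, dsd_step A b c u x y.
Proof.
move=> sE fx nstop.
have [h [ch ah dh]] : exists h, [/\ circuit h, applicable x (iR h) & 0 < descent (iR h)].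
  apply: NNPP => none; apply: nstop => h ch ah; rewrite leNgt; apply/negP => dh.
  by apply: none; exists h.
have [|g [gs ag gmax]] := ex_argmax_seq (s := s) (fun g => descent (iR g))
    (P := fun g => applicable x (iR g)); first by exists h; rewrite ?sE.
have cg : circuit g by rewrite -sE.
have [al [fal blk]] := ratio_test fx (circuit_kernel cg) (circuit_neq0 cg).
exists (x + al *: iR g); apply/dsd_stepP; exists g, al; split=> //.
  by split=> // [|h' ch' ah']; rewrite ?(lt_le_trans dh) ?gmax ?sE.
by split=> // beta; apply: blocked_max.
Qed.

Section AugmentationSequence.
Variables (xs : nat -> 'cV[R]_n) (K : nat) (G : nat -> 'cV[int]_n) (alpha : nat -> R).
Hypothesis feasible_xs0 : feasible (xs 0).
Hypothesis aug : forall k, (k < K)%N ->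
  [/\ steepest_at (xs k) (G k), max_step (xs k) (iR (G k)) (alpha k)
     & xs k.+1 = xs k + alpha k *: iR (G k)].

Local Notation del k := (descent (iR (G k))).

Lemma aug_feasible k : (k <= K)%N -> feasible (xs k).
Proof. by case: k => // k /aug[_ [fx _] ->]. Qed.

Lemma aug_alpha_gt0 k : (k < K)%N -> 0 < alpha k.
Proof. by case/aug => -[_ ag _ _] al _; exact: max_step_gt0 ag al. Qed.

Lemma aug_descent_nonincr m : (m.+1 < K)%N -> del m.+1 <= del m.
Proof.
move=> mK; have mK' := ltnW mK.
have [[cg _ dg_gt0 gmax] _ xsE] := aug mK'; have [[ch [eps [eps0 feps]] _ _] _ _] := aug mK.
set g := iR (G m) in gmax dg_gt0 xsE *; set h := iR (G m.+1) in feps *.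
have ng := circuit_neq0 cg; have nh := circuit_neq0 ch.
have := steepest_bound (aug_feasible (ltnW mK')) gmax (w := alpha m *: g + eps *: h).
rewrite mulmxDr -!scalemxAr !circuit_kernel // !scaler0 addr0 addrA -xsE => /(_ erefl feps).
rewrite costD !costZ opprD -!mulrN !descent_mulnorm1 //.
have := norm1D (alpha m *: g) (eps *: h); rewrite !norm1Z !gtr0_norm ?aug_alpha_gt0 //.
move=> /(ler_wpM2l (ltW dg_gt0)) le_norm /le_trans/(_ le_norm).
have epsNh : 0 < eps * norm1 h by rewrite mulr_gt0 ?norm1_gt0.
nra.
Qed.

Lemma aug_descent_mono m l : (m <= l)%N -> (l < K)%N -> del l <= del m.
Proof.
elim: l => [|l IH]; first by rewrite leqn0 => /eqP->.
rewrite leq_eqVlt => /orP[/eqP->//|ml] lK.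
exact: le_trans (aug_descent_nonincr lK) (IH ml (ltnW lK)).
Qed.

Lemma aug_cost_gain k m l : (k <= m)%N -> (m <= l)%N -> (l < K)%N ->
  del l * norm1 (xs m - xs k) <= cost (xs k) - cost (xs m).
Proof.
elim: m => [|m IH]; first by rewrite leqn0 => /eqP-> *; rewrite !subrr norm10 mulr0.
rewrite leq_eqVlt => /orP[/eqP-> _ _|km ml lK]; first by rewrite !subrr norm10 mulr0.
have mK : (m < K)%N := ltn_trans ml lK.
have [[cg _ dg_gt0 _] _ ->] := aug mK; set g := iR (G m) in dg_gt0 *.
have := IH km (ltnW ml) lK; have := aug_descent_mono (ltnW ml) lK.
have dl_gt0 : 0 < del l by case: (aug lK) => -[].
have := norm1D (xs m - xs k) (alpha m *: g); rewrite norm1Z gtr0_norm ?aug_alpha_gt0 //.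
rewrite addrAC costD costZ opprD addrA -mulrN (descent_mulnorm1 (circuit_neq0 cg)).
move=> /(ler_wpM2l (ltW dl_gt0)) le_norm dle gain; apply: le_trans le_norm _.
have := ler_wpM2r (mulr_ge0 (ltW (aug_alpha_gt0 mK)) (norm1_ge0 g)) dle; nra.
Qed.

Lemma aug_circuits_distinct k l : (k < l)%N -> (l < K)%N -> G k != G l.
Proof.
(* [y := xs k.+1] is blocked along [w := G k] in a coordinate [j]; if [G l = G k], the
   feasible direction [D := (xs l - y) + eps w] from [y] loses [2 eps |w_j|] of 1-norm
   in coordinate [j], which makes it steeper than the steepest circuit at [y]. *)
move=> kl lK; apply/eqP => Gkl.
have kK : (k < K)%N := ltn_trans kl lK; have k1K : (k.+1 < K)%N := leq_ltn_trans kl lK.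
have [[cg _ dk_gt0 _] stepk xs1E] := aug kK; have [[_ _ _ k1max] _ _] := aug k1K.
have [[_ [eps [eps0 feps]] _ _] _ _] := aug lK.
rewrite -Gkl in feps; set w := iR (G k) in stepk xs1E feps dk_gt0.
set y := xs k.+1 in xs1E k1max *.
have fl := aug_feasible (ltnW lK); have fy := aug_feasible (ltnW k1K).
have [j [wj blk]] := max_step_blocked (aug_feasible (ltnW kK)) (circuit_kernel cg)
  (circuit_neq0 cg) stepk.
have opp : w j 0 * ((xs l - y) j 0 + eps * w j 0) <= 0.
  by move: (blk _ feps); rewrite -xs1E !mxE addrAC.
set D := (xs l - y) + eps *: w.
have AD : AR *m D = 0.
  by rewrite mulmxDr feasible_sub_kernel // -scalemxAr circuit_kernel // scaler0 addr0.
have fD : feasible (y + D) by rewrite /D addrA subrKC.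
have := steepest_bound fy k1max AD fD.
rewrite {1}/D costD costB costZ opprD opprB -mulrN (descent_mulnorm1 (circuit_neq0 cg)).
move=> bound.
have gain := aug_cost_gain kl (leqnn l) lK; rewrite -Gkl in gain.
have mono := aug_descent_nonincr k1K.
have := ler_wpM2r (norm1_ge0 D) mono.
have := ler_wpM2l (ltW dk_gt0) (norm1D_cancel eps0 opp).
have wj_gt0 : 0 < `|w j 0| by rewrite normr_gt0.
have := mulr_gt0 (mulr_gt0 eps0 dk_gt0) wj_gt0.
lra.
Qed.

Lemma aug_length_le (s : seq 'cV[int]_n) : (forall g, g \in s <-> circuit g) ->
  (K <= size s)%N.
Proof.
move=> sE; have -> : K = size [seq G k | k <- iota 0 K] by rewrite size_map size_iota.
apply: uniq_leq_size.
  rewrite map_inj_in_uniq ?iota_uniq // => k l; rewrite !mem_iota !add0n => kK lK Gkl.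
  have [kl|lk|//] := ltngtP k l.
    by move: (aug_circuits_distinct kl lK); rewrite Gkl eqxx.
  by move: (aug_circuits_distinct lk kK); rewrite Gkl eqxx.
by move=> g /mapP[k]; rewrite mem_iota => /andP[_ kK] ->; apply/sE; case: (aug kK) => -[].
Qed.

End AugmentationSequence.

End LP.

Theorem theorem2 (R : realFieldType) (d n : nat)
  (A : 'M[int]_(d, n)) (b : 'cV[int]_d) (c u : 'cV[int]_n)
  (hu : forall i : 'I_n, 0 <= u i 0) :
  (forall (x z : 'cV[R]_n),
     feasible A b u x -> z != 0 -> AR R A *m z = 0 -> applicable A b u x z ->
     exists g : 'cV[int]_n,
       [/\ circuit R A g, applicable A b u x (intmx R g)
         & descent c z <= descent c (intmx R g)]) /\
  (exists s : seq 'cV[int]_n,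
     [/\ uniq s, (forall g, g \in s <-> circuit R A g)
       & forall (x0 : 'cV[R]_n), feasible A b u x0 ->
         forall (xs : nat -> 'cV[R]_n) (K : nat), xs 0%N = x0 ->
           (forall k, (k < K)%N -> dsd_step A b c u (xs k) (xs k.+1)) ->
           [/\ (K <= size s)%N,
               (dsd_stopped A b c u (xs K) -> optimal A b c u (xs K))
             & (~ dsd_stopped A b c u (xs K) ->
                  exists y, dsd_step A b c u (xs K) y)]]).
Proof.
split=> [x z|]; first exact: ex_circuit_descent_ge.
have [s [s_uniq sE]] := ex_circuits_enum R A.
exists s; split=> // x0 fx0 xs K xs0 steps.
have /choice[GA aug] : forall k, exists p : 'cV[int]_n * R, (k < K)%N ->
    [/\ steepest_at A b c u (xs k) p.1, max_step A b u (xs k) (intmx R p.1) p.2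
      & xs k.+1 = xs k + p.2 *: intmx R p.1].
  move=> k; have [/steps/dsd_stepP[g [al step]]|_] := ltnP k K; first by exists (g, al).
  by exists (0, 0).
rewrite -xs0 in fx0; have fxK := aug_feasible fx0 aug (leqnn K).
split; last exact: ex_dsd_step sE fxK.
  exact: (aug_length_le (G := fun k => (GA k).1) (alpha := fun k => (GA k).2) fx0 aug sE).
exact: dsd_stopped_optimal.
Qed.
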